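(* (Completeness.) For every finite multiset $\Gamma$ of ILL formulae and every ILL formula $\varphi$: if $\Gamma\Vdash\varphi$ (i.e. $\Gamma\Vdash^{\varnothing}_{\mathcal{B}}\varphi$ for every base $\mathcal{B}$), then $\Gamma\vdash\varphi$ is derivable in $\mathrm{N_{ILL}}$.
   Context: Fix a set $\mathbb{A}$ of propositional atoms. ILL formulae: $\phi ::= p\in\mathbb{A} \mid \top \mid 0 \mid 1 \mid \phi\multimap\phi \mid \phi\otimes\phi \mid \phi\,\&\,\phi \mid \phi\oplus\phi \mid\ !\phi$. All multisets are finite; ''$\Gamma,\Delta$'' denotes multiset union. Natural deduction $\mathrm{N_{ILL}}$: $\Gamma\vdash\varphi$ is defined inductively by: (Ax) $\varphi\vdash\varphi$; ($\multimap$I) from $\Gamma,\phi\vdash\psi$ infer $\Gamma\vdash\phi\multimap\psi$; ($\multimap$E) from $\Gamma\vdash\phi\multimap\psi$ and $\Delta\vdash\phi$ infer $\Gamma,\Delta\vdash\psi$; ($\otimes$I) from $\Gamma\vdash\phi$, $\Delta\vdash\psi$ infer $\Gamma,\Delta\vdash\phi\otimes\psi$; ($\otimes$E) from $\Gamma\vdash\phi\otimes\psi$ and $\Delta,\phi,\psi\vdash\chi$ infer $\Gamma,\Delta\vdash\chi$; ($1$I) $\vdash 1$; ($1$E) from $\Gamma\vdash 1$, $\Delta\vdash\phi$ infer $\Gamma,\Delta\vdash\phi$; ($\&$I) from $\Gamma\vdash\phi$, $\Gamma\vdash\psi$ infer $\Gamma\vdash\phi\&\psi$; ($\&$E) from $\Gamma\vdash\phi\&\psi$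 infer $\Gamma\vdash\phi$ and infer $\Gamma\vdash\psi$; ($\oplus$I) from $\Gamma\vdash\phi$ (or $\Gamma\vdash\psi$) infer $\Gamma\vdash\phi\oplus\psi$; ($\oplus$E) from $\Gamma\vdash\phi\oplus\psi$, $\Delta,\phi\vdash\chi$, $\Delta,\psi\vdash\chi$ infer $\Gamma,\Delta\vdash\chi$; ($\top$I) for $n\ge0$, from $\Gamma_i\vdash\phi_i$ ($i=1..n$) infer $\Gamma_1,\dots,\Gamma_n\vdash\top$; ($0$E) for $n\ge 0$, from $\Gamma_i\vdash\phi_i$ ($i=1..n$) and $\Delta\vdash 0$ infer $\Gamma_1,\dots,\Gamma_n,\Delta\vdash\chi$; (Prom$_n$) for $n\ge0$, from $\Gamma_i\vdash\,!\psi_i$ ($i=1..n$) and $!\psi_1,\dots,!\psi_n\vdash\phi$ infer $\Gamma_1,\dots,\Gamma_n\vdash\,!\phi$; (Der) from $\Gamma\vdash\,!\phi$, $\Delta,\phi\vdash\psi$ infer $\Gamma,\Delta\vdash\psi$; (Wk) from $\Gamma\vdash\,!\phi$, $\Delta\vdash\psi$ infer $\Gamma,\Delta\vdash\psi$; (Ctr) from $\Gamma\vdash\,!\phi$, $\Delta,!\phi,!\phi\vdash\psi$ infer $\Gamma,\Delta\vdash\psi$. Atomic rules and bases: an atomic sequent is $P\Rightarrow p$ with $P$ a multiset of atoms, $p$ an atom. An atomic box is a multiset of atomic sequents. An atomic rule is a triple $\langle\mathbf{A},\mathbf{S},p\rangle$ with $\mathbf{A}$ a multiset of atomic boxes, $\mathbf{S}$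 an atomic box, $p$ an atom. A base is a set of atomic rules. An atom $p$ is persistent in $\mathcal{B}$ if some $\langle\varnothing,\mathbf{S},p\rangle\in\mathcal{B}$ has $\mathbf{S}\neq\varnothing$. Derivability $\vdash_{\mathcal{B}}$ between atomic multisets and atoms is defined inductively: (Ref) $p\vdash_{\mathcal{B}}p$; (App) if $\langle\mathbf{A},\mathbf{S},p\rangle\in\mathcal{B}$ with $\mathbf{A}=\{\mathbf{T}_1,\dots,\mathbf{T}_m\}$, and there are atomic multisets $C_1,\dots,C_n$ ($n\ge m$) and a multiset $D=\{d_{m+1},\dots,d_n\}$ of atoms persistent in $\mathcal{B}$ such that $C_i,Q\vdash_{\mathcal{B}}q$ for every $i\le m$ and every $Q\Rightarrow q\in\mathbf{T}_i$, $C_j\vdash_{\mathcal{B}}d_j$ for every $m<j\le n$, and $D,U\vdash_{\mathcal{B}}v$ for every $U\Rightarrow v\in\mathbf{S}$, then $C_1,\dots,C_n\vdash_{\mathcal{B}}p$. Support $\Vdash^L_{\mathcal{B}}$ (base $\mathcal{B}$, atomic multiset $L$), defined by induction on formulae: $\Vdash^L_{\mathcal{B}}p$ iff $L\vdash_{\mathcal{B}}p$; $\Vdash^L_{\mathcal{B}}\varphi\multimap\psi$ iff $\varphi\Vdash^L_{\mathcal{B}}\psi$; $\Vdash^L_{\mathcal{B}}\varphi\otimes\psi$ iff for all $\mathcal{C}\supseteq\mathcal{B}$, atomic multisets $K$, atoms $p$: if $\varphi,\psi\Vdash^K_{\mathcal{C}}p$ then $\Vdash^{L,K}_{\mathcal{C}}p$;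 $\Vdash^L_{\mathcal{B}}1$ iff for all $\mathcal{C}\supseteq\mathcal{B}$, $K$, $p$: if $\Vdash^K_{\mathcal{C}}p$ then $\Vdash^{L,K}_{\mathcal{C}}p$; $\Vdash^L_{\mathcal{B}}\varphi\&\psi$ iff $\Vdash^L_{\mathcal{B}}\varphi$ and $\Vdash^L_{\mathcal{B}}\psi$; $\Vdash^L_{\mathcal{B}}\varphi\oplus\psi$ iff for all $\mathcal{C}\supseteq\mathcal{B}$, $K$, $p$: if $\varphi\Vdash^K_{\mathcal{C}}p$ and $\psi\Vdash^K_{\mathcal{C}}p$ then $\Vdash^{L,K}_{\mathcal{C}}p$; $\Vdash^L_{\mathcal{B}}0$ iff $\Vdash^{L,K}_{\mathcal{B}}p$ for all atoms $p$ and atomic multisets $K$; $\Vdash^L_{\mathcal{B}}\top$ always; $\Vdash^L_{\mathcal{B}}!\varphi$ iff for all $\mathcal{C}\supseteq\mathcal{B}$, $K$, $p$: if (for all $\mathcal{D}\supseteq\mathcal{C}$, $\Vdash^{\varnothing}_{\mathcal{D}}\varphi$ implies $\Vdash^K_{\mathcal{D}}p$) then $\Vdash^{L,K}_{\mathcal{C}}p$. For nonempty multisets: $\Vdash^L_{\mathcal{B}}\Gamma,\Delta$ iff $L=K,M$ for some $K,M$ with $\Vdash^K_{\mathcal{B}}\Gamma$ and $\Vdash^M_{\mathcal{B}}\Delta$. For a nonempty antecedent written as $!\Delta,\Theta$, where $!\Delta$ collects the formulae whose top-level connective is $!$ (with $\Delta$ the formulae under those $!$) and $\Theta$ contains none: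 $!\Delta,\Theta\Vdash^L_{\mathcal{B}}\varphi$ iff for all $\mathcal{C}\supseteq\mathcal{B}$ and atomic $K$, if $\Vdash^{\varnothing}_{\mathcal{C}}\delta$ for every $\delta\in\Delta$ and $\Vdash^K_{\mathcal{C}}\Theta$ then $\Vdash^{L,K}_{\mathcal{C}}\varphi$ (when $\Theta$ is empty, $K$ is empty). An empty antecedent: $\varnothing\Vdash^L_{\mathcal{B}}\varphi$ means $\Vdash^L_{\mathcal{B}}\varphi$. A sequent $(\Gamma:\varphi)$ is valid, written $\Gamma\Vdash\varphi$, iff $\Gamma\Vdash^{\varnothing}_{\mathcal{B}}\varphi$ for all bases $\mathcal{B}$. *)

(* Intuitionistic linear logic (ILL): natural deduction N_ILL
   and base-extension semantics (support). Multisets are represented by lists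
   taken up to permutation (Stdlib's [Permutation]). *)
From Stdlib Require Import List Permutation.
Import ListNotations.

Definition atom := nat.

Inductive formula : Type :=
| Atom   : atom -> formula
| Top    : formula
| Zero   : formula
| One    : formula
| Limp   : formula -> formula -> formula
| Tensor : formula -> formula -> formula
| With   : formula -> formula -> formula
| Plus   : formula -> formula -> formula
| Bang   : formula -> formula.

(** * Natural deduction N_ILL.  [nd Γ φ] : Γ ⊢ φ, Γ a multiset (list up to
    permutation, rule [nd_perm]). Rules with n premises take a list [prems]
    of (Γ_i, φ_i) pairs. *)
Inductive nd : list formula -> formula -> Prop :=
| nd_perm Γ Γ' φ : Permutation Γ Γ' -> nd Γ φ -> nd Γ' φ
| nd_ax φ : nd [φ] φ
| nd_limpI Γ φ ψ : nd (Γ ++ [φ]) ψ -> nd Γ (Limp φ ψ)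
| nd_limpE Γ Δ φ ψ : nd Γ (Limp φ ψ) -> nd Δ φ -> nd (Γ ++ Δ) ψ
| nd_tensorI Γ Δ φ ψ : nd Γ φ -> nd Δ ψ -> nd (Γ ++ Δ) (Tensor φ ψ)
| nd_tensorE Γ Δ φ ψ χ :
    nd Γ (Tensor φ ψ) -> nd (Δ ++ [φ; ψ]) χ -> nd (Γ ++ Δ) χ
| nd_oneI : nd [] One
| nd_oneE Γ Δ φ : nd Γ One -> nd Δ φ -> nd (Γ ++ Δ) φ
| nd_withI Γ φ ψ : nd Γ φ -> nd Γ ψ -> nd Γ (With φ ψ)
| nd_withE1 Γ φ ψ : nd Γ (With φ ψ) -> nd Γ φ
| nd_withE2 Γ φ ψ : nd Γ (With φ ψ) -> nd Γ ψ
| nd_plusI1 Γ φ ψ : nd Γ φ -> nd Γ (Plus φ ψ)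
| nd_plusI2 Γ φ ψ : nd Γ ψ -> nd Γ (Plus φ ψ)
| nd_plusE Γ Δ φ ψ χ :
    nd Γ (Plus φ ψ) -> nd (Δ ++ [φ]) χ -> nd (Δ ++ [ψ]) χ -> nd (Γ ++ Δ) χ
| nd_topI (prems : list (list formula * formula)) :
    (forall G f, In (G, f) prems -> nd G f) ->
    nd (concat (map fst prems)) Top
| nd_zeroE (prems : list (list formula * formula)) Δ χ :
    (forall G f, In (G, f) prems -> nd G f) ->
    nd Δ Zero ->
    nd (concat (map fst prems) ++ Δ) χ
| nd_prom (prems : list (list formula * formula)) φ :
    (forall G ψ, In (G, ψ) prems -> nd G (Bang ψ)) ->
    nd (map (fun pr => Bang (snd pr)) prems) φ ->
    nd (concat (map fst prems)) (Bang φ)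
| nd_der Γ Δ φ ψ : nd Γ (Bang φ) -> nd (Δ ++ [φ]) ψ -> nd (Γ ++ Δ) ψ
| nd_wk Γ Δ φ ψ : nd Γ (Bang φ) -> nd Δ ψ -> nd (Γ ++ Δ) ψ
| nd_ctr Γ Δ φ ψ :
    nd Γ (Bang φ) -> nd (Δ ++ [Bang φ; Bang φ]) ψ -> nd (Γ ++ Δ) ψ.

Definition atomic_sequent := (list atom * atom)%type.
Definition box := list atomic_sequent.
Definition rule := (list box * box * atom)%type.
Definition base := rule -> Prop.

Definition extends (B C : base) : Prop := forall r, B r -> C r.

Definition persistent (B : base) (p : atom) : Prop :=
  exists S : box, B ([], S, p) /\ S <> [].

(* [deriv B L p] : L ⊢_B p.  In [d_app], the rule is ⟨A,S,p⟩ with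
   A = [T_1;...;T_m] paired with [Cs] = [C_1;...;C_m], and
   [ext] = [(C_{m+1}, d_{m+1}); ...; (C_n, d_n)], so D = map snd ext. *)
Inductive deriv (B : base) : list atom -> atom -> Prop :=
| d_perm L L' p : Permutation L L' -> deriv B L p -> deriv B L' p
| d_ref p : deriv B [p] p
| d_app (A : list box) (S : box) (p : atom)
        (Cs : list (list atom)) (ext : list (list atom * atom)) :
    B (A, S, p) ->
    length Cs = length A ->
    (forall T C, In (T, C) (combine A Cs) ->
       forall Q q, In (Q, q) T -> deriv B (C ++ Q) q) ->
    (forall C d, In (C, d) ext -> persistent B d) ->
    (forall C d, In (C, d) ext -> deriv B C d) ->
    (forall U v, In (U, v) S -> deriv B (map snd ext ++ U) v) ->
    deriv B (concat Cs ++ concat (map fst ext)) p.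

(* Semantic content of an antecedent formula: either !δ (carrying the
   predicate C ↦ ⊩^∅_C δ) or a non-! formula θ (carrying (C,K) ↦ ⊩^K_C θ). *)
Inductive item : Type :=
| IBang  : (base -> Prop) -> item
| IPlain : (base -> list atom -> Prop) -> item.

Fixpoint bang_items (xs : list item) : list (base -> Prop) :=
  match xs with
  | [] => []
  | IBang b :: xs' => b :: bang_items xs'
  | IPlain _ :: xs' => bang_items xs'
  end.

Fixpoint plain_items (xs : list item) : list (base -> list atom -> Prop) :=
  match xs with
  | [] => []
  | IBang _ :: xs' => plain_items xs'
  | IPlain f :: xs' => f :: plain_items xs'
  end.

(* ⊩^K_C Θ for a multiset Θ (given by semantic items); the empty Θ forces
   K empty (convention "when Θ is empty, K is empty"). *)
Fixpoint supp_multi (C : base) (K : list atom)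
         (fs : list (base -> list atom -> Prop)) : Prop :=
  match fs with
  | [] => K = []
  | [f] => f C K
  | f :: fs' => exists K1 K2, Permutation K (K1 ++ K2) /\ f C K1 /\
                              supp_multi C K2 fs'
  end.

(* !Δ,Θ ⊩^L_B χ, with the succedent given semantically by [concl]. *)
Definition sem_seq (B : base) (L : list atom) (ant : list item)
           (concl : base -> list atom -> Prop) : Prop :=
  match ant with
  | [] => concl B L
  | _ => forall C, extends B C -> forall K : list atom,
           (forall b, In b (bang_items ant) -> b C) ->
           supp_multi C K (plain_items ant) ->
           concl C (L ++ K)
  end.

Fixpoint supp (B : base) (L : list atom) (φ : formula) {struct φ} : Prop :=
  match φ with
  | Atom p => deriv B L p
  | Limp a b =>
      sem_seq B L
        [match a with
         | Bang d => IBang (fun C => supp C [] d)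
         | _ => IPlain (fun C K => supp C K a)
         end]
        (fun C M => supp C M b)
  | Tensor a b =>
      forall C, extends B C -> forall (K : list atom) (p : atom),
        sem_seq C K
          [match a with
           | Bang d => IBang (fun D => supp D [] d)
           | _ => IPlain (fun D M => supp D M a)
           end;
           match b with
           | Bang d => IBang (fun D => supp D [] d)
           | _ => IPlain (fun D M => supp D M b)
           end]
          (fun D M => deriv D M p) ->
        deriv C (L ++ K) p
  | One =>
      forall C, extends B C -> forall (K : list atom) (p : atom),
        deriv C K p -> deriv C (L ++ K) p
  | With a b => supp B L a /\ supp B L b
  | Plus a b =>
      forall C, extends B C -> forall (K : list atom) (p : atom),
        sem_seq C K
          [match a with
           | Bang d => IBang (fun D => supp D [] d)
           | _ => IPlain (fun D M => supp D M a)
           end]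
          (fun D M => deriv D M p) ->
        sem_seq C K
          [match b with
           | Bang d => IBang (fun D => supp D [] d)
           | _ => IPlain (fun D M => supp D M b)
           end]
          (fun D M => deriv D M p) ->
        deriv C (L ++ K) p
  | Zero => forall (p : atom) (K : list atom), deriv B (L ++ K) p
  | Top => True
  | Bang a =>
      forall C, extends B C -> forall (K : list atom) (p : atom),
        (forall D, extends C D -> supp D [] a -> deriv D K p) ->
        deriv C (L ++ K) p
  end.

Definition item_of (φ : formula) : item :=
  match φ with
  | Bang d => IBang (fun C => supp C [] d)
  | _ => IPlain (fun C K => supp C K φ)
  end.

Definition seq_supp (B : base) (L : list atom) (Γ : list formula)
           (φ : formula) : Prop :=
  sem_seq B L (map item_of Γ) (fun C M => supp C M φ).

Definition valid (Γ : list formula) (φ : formula) : Prop :=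
  forall B : base, seq_supp B [] Γ φ.

From Stdlib Require Import List Permutation Lia PeanoNat.
Import ListNotations.

(* Completeness by simulation.  Give every non-atomic subformula χ of Γ, φ a
   fresh atom χ♭ (atoms code themselves) and let the simulation base 𝒰 contain,
   for each such χ, atomic rules mimicking the N_ILL rules of its main
   connective; for χ = !δ the rule ⟨∅, {⇒ δ♭}, (!δ)♭⟩ makes (!δ)♭ persistent.
   By induction on χ, ⊩^L_𝒟 χ iff L ⊢_𝒟 χ♭ in every 𝒟 ⊇ 𝒰.  Validity of
   Γ ⊢ φ thus gives Γ♭ ⊢_𝒰 φ♭, and reading each rule of 𝒰 back as the N_ILL
   rule it mimics turns this derivation into one of Γ ⊢ φ.

   The delicate case is !δ: to use its support clause one adds the axiom
   ⇒ δ♭ to the base, then eliminates it again by replacing each use with a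
   dereliction of (!δ)♭, weakening (!δ)♭ into all other premises and
   contracting the copies. *)

Lemma extends_refl B : extends B B.
Proof. intros r H; exact H. Qed.

Lemma extends_trans B C D : extends B C -> extends C D -> extends B D.
Proof. intros H1 H2 r H; auto. Qed.

Lemma persistent_extends B C p : extends B C -> persistent B p -> persistent C p.
Proof. intros HBC [S [HS Hne]]. exists S; auto. Qed.

Lemma deriv_extends B C L p : extends B C -> deriv B L p -> deriv C L p.
Proof.
  intros HBC H. induction H.
  - eapply d_perm; eauto.
  - apply d_ref.
  - apply (d_app C A S p Cs ext); eauto using persistent_extends.
Qed.

Lemma supp_perm χ : forall B L L', Permutation L L' -> supp B L χ -> supp B L' χ.
Proof.
  induction χ; simpl; intros B L L' HP H.
  - now apply d_perm with L.
  - exact I.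
  - intros p K. apply d_perm with (L ++ K); auto using Permutation_app_tail.
  - intros C HC K p Hp. apply d_perm with (L ++ K); auto using Permutation_app_tail.
  - intros C HC K Hb Hm. apply IHχ2 with (L ++ K); auto using Permutation_app_tail.
  - intros C HC K p Hp. apply d_perm with (L ++ K); auto using Permutation_app_tail.
  - destruct H; split; eauto.
  - intros C HC K p H1 H2. apply d_perm with (L ++ K); auto using Permutation_app_tail.
  - intros C HC K p Hp. apply d_perm with (L ++ K); auto using Permutation_app_tail.
Qed.

Lemma supp_extends χ : forall B C L, extends B C -> supp B L χ -> supp C L χ.
Proof.
  induction χ; simpl; intros B C L HBC H;
    try (intros C' HC'; apply H; exact (extends_trans _ _ _ HBC HC')).
  - eauto using deriv_extends.
  - exact I.
  - intros p K. eauto using deriv_extends.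
  - destruct H; split; eauto.
Qed.

Definition ant_supp (B : base) (K : list atom) (a : formula) : Prop :=
  match a with
  | Bang d => supp B [] d /\ K = []
  | _ => supp B K a
  end.

Lemma bang_or_plain a :
  {d | a = Bang d} +
  {item_of a = IPlain (fun C K => supp C K a) /\ forall C K, ant_supp C K a = supp C K a}.
Proof. destruct a; try (right; split; reflexivity). left; eauto. Qed.

Lemma ant_supp_extends a B C K : extends B C -> ant_supp B K a -> ant_supp C K a.
Proof.
  destruct (bang_or_plain a) as [[d ->]|[_ Ha]]; simpl.
  - intros H [H1 H2]; split; eauto using supp_extends.
  - rewrite !Ha. apply supp_extends.
Qed.

Lemma supp_of_ant_supp a B K : ant_supp B K a -> supp B K a.
Proof.
  destruct (bang_or_plain a) as [[d ->]|[_ Ha]]; simpl.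
  - intros [H ->] C HC K' p Hd. eauto using extends_refl, supp_extends.
  - rewrite Ha; auto.
Qed.

Inductive ctx_supp (C : base) : list atom -> list formula -> Prop :=
| ctx_supp_nil : ctx_supp C [] []
| ctx_supp_cons K1 K2 a G :
    ant_supp C K1 a -> ctx_supp C K2 G -> ctx_supp C (K1 ++ K2) (a :: G).

Lemma supp_multi_cons C K1 K2 f fs :
  f C K1 -> supp_multi C K2 fs -> supp_multi C (K1 ++ K2) (f :: fs).
Proof.
  intros H1 H2. destruct fs.
  - simpl in *. subst. rewrite app_nil_r. auto.
  - exists K1, K2. auto.
Qed.

Lemma items_of_ctx_supp C K G : ctx_supp C K G ->
  (forall b, In b (bang_items (map item_of G)) -> b C) /\
  exists K', Permutation K K' /\ supp_multi C K' (plain_items (map item_of G)).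
Proof.
  induction 1 as [|K1 K2 a G Ha _ [IHb [K' [HP IHp]]]]; simpl.
  - split; [intros b []| now exists []].
  - destruct (bang_or_plain a) as [[d ->]|[Ea Hsupp]].
    + destruct Ha as [Hd ->]. simpl. split; [|now exists K'].
      intros b [<-|Hb]; [exact Hd | exact (IHb b Hb)].
    + rewrite Ea. cbn [bang_items plain_items]. split; [exact IHb|].
      exists (K1 ++ K'). split; [now apply Permutation_app_head|].
      apply supp_multi_cons; auto. now rewrite <- Hsupp.
Qed.

Lemma ctx_supp_of_items C G : forall K,
  (forall b, In b (bang_items (map item_of G)) -> b C) ->
  supp_multi C K (plain_items (map item_of G)) ->
  exists K', Permutation K K' /\ ctx_supp C K' G.
Proof.
  induction G as [|a G IH]; simpl; intros K Hb Hp.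
  - subst. exists []. split; constructor.
  - destruct (bang_or_plain a) as [[d ->]|[Ea Hsupp]]; simpl in *.
    + destruct (IH K (fun b Hin => Hb b (or_intror Hin)) Hp) as [K' [HP HG]].
      exists ([] ++ K'). split; [exact HP|]. constructor; auto.
      split; [exact (Hb _ (or_introl eq_refl))|reflexivity].
    + rewrite Ea in Hb, Hp. cbn [bang_items plain_items] in Hb, Hp.
      destruct (plain_items (map item_of G)) eqn:Eplain.
      * destruct (IH [] Hb eq_refl) as [K' [HP HG]].
        apply Permutation_nil in HP as ->.
        exists (K ++ []). split; [now rewrite app_nil_r|].
        constructor; auto. now rewrite Hsupp.
      * destruct Hp as [K1 [K2 [HP [H1 H2]]]].
        destruct (IH K2 Hb H2) as [K' [HP' HG]].
        exists (K1 ++ K'). split; [now rewrite HP, HP'|].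
        constructor; auto. now rewrite Hsupp.
Qed.

Lemma sem_seq_ctx_supp B L G (concl : base -> list atom -> Prop) :
  (forall C M M', Permutation M M' -> concl C M -> concl C M') -> G <> [] ->
  sem_seq B L (map item_of G) concl <->
  forall C, extends B C -> forall K, ctx_supp C K G -> concl C (L ++ K).
Proof.
  intros Hconcl HG. destruct G as [|a G]; [congruence|]. unfold sem_seq. split.
  - intros H C HC K HK. apply items_of_ctx_supp in HK as [Hb [K' [HP Hp]]].
    eapply Hconcl; [apply Permutation_app_head; symmetry; exact HP|]. auto.
  - intros H C HC K Hb Hp. destruct (ctx_supp_of_items C _ K Hb Hp) as [K' [HP HK]].
    eapply Hconcl; [apply Permutation_app_head; symmetry; exact HP|]. auto.
Qed.

Lemma ctx_supp_singleton C K a : ctx_supp C K [a] <-> ant_supp C K a.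
Proof.
  split.
  - inversion 1 as [|K1 K2 a' G Ha HG]; subst. inversion HG; subst.
    now rewrite app_nil_r.
  - intros H. rewrite <- (app_nil_r K). repeat constructor; auto.
Qed.

Lemma ctx_supp_pair C K a b :
  ctx_supp C K [a; b] <->
  exists Ka Kb, K = Ka ++ Kb /\ ant_supp C Ka a /\ ant_supp C Kb b.
Proof.
  split.
  - inversion 1 as [|Ka K2 a' G Ha HG]; subst.
    apply ctx_supp_singleton in HG. eauto.
  - intros [Ka [Kb [-> [Ha Hb]]]]. constructor; auto. now apply ctx_supp_singleton.
Qed.

Lemma supp_limp B L a b :
  supp B L (Limp a b) <->
  forall C, extends B C -> forall K, ant_supp C K a -> supp C (L ++ K) b.
Proof.
  transitivity (sem_seq B L (map item_of [a]) (fun C M => supp C M b)); [reflexivity|].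
  rewrite sem_seq_ctx_supp by (eauto using supp_perm || discriminate).
  split; intros H C HC K HK; apply H; auto; now apply ctx_supp_singleton.
Qed.

Lemma supp_tensor B L a b :
  supp B L (Tensor a b) <->
  forall C, extends B C -> forall K p,
    (forall D, extends C D -> forall Ka Kb, ant_supp D Ka a -> ant_supp D Kb b ->
       deriv D (K ++ Ka ++ Kb) p) ->
    deriv C (L ++ K) p.
Proof.
  transitivity (forall C, extends B C -> forall K p,
                  sem_seq C K (map item_of [a; b]) (fun D M => deriv D M p) ->
                  deriv C (L ++ K) p); [reflexivity|].
  split; intros H C HC K p Hp; apply H; auto;
    [rewrite sem_seq_ctx_supp by (eauto using d_perm || discriminate)
    |rewrite sem_seq_ctx_supp in Hp by (eauto using d_perm || discriminate)].
  - intros D HD M HM. apply ctx_supp_pair in HM as [Ka [Kb [-> [Ha Hb]]]]. auto.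
  - intros D HD Ka Kb Ha Hb. apply Hp; auto. apply ctx_supp_pair; eauto.
Qed.

Lemma supp_plus B L a b :
  supp B L (Plus a b) <->
  forall C, extends B C -> forall K p,
    (forall D, extends C D -> forall Ka, ant_supp D Ka a -> deriv D (K ++ Ka) p) ->
    (forall D, extends C D -> forall Kb, ant_supp D Kb b -> deriv D (K ++ Kb) p) ->
    deriv C (L ++ K) p.
Proof.
  transitivity (forall C, extends B C -> forall K p,
                  sem_seq C K (map item_of [a]) (fun D M => deriv D M p) ->
                  sem_seq C K (map item_of [b]) (fun D M => deriv D M p) ->
                  deriv C (L ++ K) p); [reflexivity|].
  setoid_rewrite sem_seq_ctx_supp; try (eauto using d_perm || discriminate).
  setoid_rewrite ctx_supp_singleton. reflexivity.
Qed.

Lemma valid_supp Γ φ : valid Γ φ -> forall C K, ctx_supp C K Γ -> supp C K φ.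
Proof.
  intros Hvalid C K HK. destruct Γ as [|a Γ].
  - inversion HK; subst. exact (Hvalid C).
  - apply (proj1 (sem_seq_ctx_supp C [] (a :: Γ) (fun D M => supp D M φ)
                    (fun D => supp_perm φ D) ltac:(discriminate)) (Hvalid C));
      auto using extends_refl.
Qed.

Definition box_holds (R : list atom -> atom -> Prop) (C : list atom) (T : box) : Prop :=
  Forall (fun s => R (C ++ fst s) (snd s)) T.

Lemma Forall2_In_combine {X Y} (R : X -> Y -> Prop) xs ys x y :
  Forall2 R xs ys -> In (y, x) (combine ys xs) -> R x y.
Proof.
  intros H. revert x y. induction H; simpl; [tauto|].
  intros x' y' [[= <- <-]|Hin]; auto.
Qed.

Lemma Forall2_of_combine {X Y} (R : X -> Y -> Prop) xs ys :
  length xs = length ys -> (forall x y, In (y, x) (combine ys xs) -> R x y) ->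
  Forall2 R xs ys.
Proof.
  revert ys. induction xs as [|x xs IH]; intros [|y ys] Hlen H; try discriminate;
    constructor; simpl in H; auto.
Qed.

Lemma concat_map_cons_perm {X} (x : X) (Ls : list (list X)) :
  Permutation (concat (map (cons x) Ls)) (repeat x (length Ls) ++ concat Ls).
Proof.
  induction Ls as [|L Ls IH]; simpl; auto.
  apply perm_skip. rewrite IH. apply Permutation_app_swap_app.
Qed.

Lemma In_combine_map_cons {X Y} (x : Y) (A : list X) (Cs : list (list Y)) T C' :
  In (T, C') (combine A (map (cons x) Cs)) ->
  exists C0, C' = x :: C0 /\ In (T, C0) (combine A Cs).
Proof.
  revert Cs. induction A as [|a A IH]; intros [|c Cs]; simpl; try tauto.
  intros [[= <- <-]|H]; [eauto|].
  destruct (IH Cs H) as [C0 [-> H0]]. eauto.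
Qed.

Lemma deriv_app_boxes B A p Cs :
  B (A, [], p) -> Forall2 (box_holds (deriv B)) Cs A -> deriv B (concat Cs) p.
Proof.
  intros HB HCs. rewrite <- (app_nil_r (concat Cs)).
  change (deriv B (concat Cs ++ concat (map fst (@nil (list atom * atom)))) p).
  apply d_app with (A := A) (S := []); try (intros ? ? []); auto.
  - exact (Forall2_length HCs).
  - intros T C Hin Q q HQ.
    exact (proj1 (Forall_forall _ _) (Forall2_In_combine _ _ _ _ _ HCs Hin) (Q, q) HQ).
Qed.

Ltac split_boxes :=
  repeat (apply Forall2_cons || apply Forall_cons || apply Forall2_nil || apply Forall_nil);
  cbn [fst snd]; rewrite ?app_nil_r.

Lemma nd_weaken_bangs Δ ψ (prems : list (list formula * formula)) :
  nd Δ ψ ->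
  (forall G χ, In (G, χ) prems -> nd G χ /\ exists δ, χ = Bang δ) ->
  nd (Δ ++ concat (map fst prems)) ψ.
Proof.
  intros Hψ Hprems. induction prems as [|[G χ] prems IH]; simpl.
  - now rewrite app_nil_r.
  - destruct (Hprems G χ (or_introl eq_refl)) as [HG [δ ->]].
    apply nd_perm with (G ++ Δ ++ concat (map fst prems)).
    + now rewrite Permutation_app_swap_app.
    + apply nd_wk with δ; auto. apply IH. intros; apply Hprems; now right.
Qed.

Lemma nd_prom_bangs (prems : list (list formula * formula)) φ :
  (forall G χ, In (G, χ) prems -> nd G χ /\ exists δ, χ = Bang δ) ->
  nd (map snd prems) φ ->
  nd (concat (map fst prems)) (Bang φ).
Proof.
  intros Hprems Hφ.
  set (unbang := fun χ => match χ with Bang δ => δ | _ => χ end).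
  assert (Hbang : forall G χ, In (G, χ) prems -> Bang (unbang χ) = χ).
  { intros G χ Hin. now destruct (Hprems G χ Hin) as [_ [δ ->]]. }
  replace (concat (map fst prems))
    with (concat (map fst (map (fun e => (fst e, unbang (snd e))) prems)))
    by now rewrite map_map.
  apply nd_prom.
  - intros G δ Hin. apply in_map_iff in Hin as [[G' χ] [[= <- <-] Hin]].
    rewrite (Hbang G' χ Hin). now apply (Hprems G' χ).
  - rewrite map_map. erewrite map_ext_in; [exact Hφ|].
    intros [G χ] Hin. exact (Hbang G χ Hin).
Qed.

Definition axiom_premises (Δ : list formula) : list (list formula * formula) :=
  map (fun χ => ([χ], χ)) Δ.

Lemma concat_axiom_premises Δ : concat (map fst (axiom_premises Δ)) = Δ.
Proof. induction Δ; simpl; f_equal; auto. Qed.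

Lemma nd_axiom_premises Δ G χ : In (G, χ) (axiom_premises Δ) -> nd G χ.
Proof. intros Hin. apply in_map_iff in Hin as [χ' [[= <- <-] _]]. apply nd_ax. Qed.

Lemma nd_top Δ : nd Δ Top.
Proof.
  rewrite <- (concat_axiom_premises Δ). apply nd_topI, nd_axiom_premises.
Qed.

Lemma nd_zero Γ Δ χ : nd Γ Zero -> nd (Γ ++ Δ) χ.
Proof.
  intros H. apply nd_perm with (Δ ++ Γ); [apply Permutation_app_comm|].
  rewrite <- (concat_axiom_premises Δ) at 1.
  apply nd_zeroE; [apply (nd_axiom_premises Δ) | exact H].
Qed.

Definition subformula_closed (InS : formula -> Prop) : Prop :=
  forall χ, InS χ -> match χ with
    | Limp a b | Tensor a b | With a b | Plus a b => InS a /\ InS b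
    | Bang a => InS a
    | _ => True
    end.

Definition add_axiom (B : base) (p : atom) : base := fun r => B r \/ r = ([], [], p).

Section Simulation.

Variable fl : formula -> atom.
Variable InS : formula -> Prop.

Inductive sim_base : rule -> Prop :=
| sim_limpI a b : InS (Limp a b) -> sim_base ([[([fl a], fl b)]], [], fl (Limp a b))
| sim_limpE a b : InS (Limp a b) ->
    sim_base ([[([], fl (Limp a b))]; [([], fl a)]], [], fl b)
| sim_tensorI a b : InS (Tensor a b) ->
    sim_base ([[([], fl a)]; [([], fl b)]], [], fl (Tensor a b))
| sim_tensorE a b p : InS (Tensor a b) ->
    sim_base ([[([], fl (Tensor a b))]; [([fl a; fl b], p)]], [], p)
| sim_oneI : InS One -> sim_base ([], [], fl One)
| sim_oneE p : InS One -> sim_base ([[([], fl One)]; [([], p)]], [], p)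
| sim_withI a b : InS (With a b) ->
    sim_base ([[([], fl a); ([], fl b)]], [], fl (With a b))
| sim_withE1 a b : InS (With a b) -> sim_base ([[([], fl (With a b))]], [], fl a)
| sim_withE2 a b : InS (With a b) -> sim_base ([[([], fl (With a b))]], [], fl b)
| sim_plusI1 a b : InS (Plus a b) -> sim_base ([[([], fl a)]], [], fl (Plus a b))
| sim_plusI2 a b : InS (Plus a b) -> sim_base ([[([], fl b)]], [], fl (Plus a b))
| sim_plusE a b p : InS (Plus a b) ->
    sim_base ([[([], fl (Plus a b))]; [([fl a], p); ([fl b], p)]], [], p)
| sim_zeroE p : InS Zero -> sim_base ([[([], fl Zero)]; []], [], p)
| sim_topI : InS Top -> sim_base ([[]], [], fl Top)
| sim_bangI d : InS (Bang d) -> sim_base ([], [([], fl d)], fl (Bang d))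
| sim_der d p : InS (Bang d) ->
    sim_base ([[([], fl (Bang d))]; [([fl d], p)]], [], p)
| sim_wk d p : InS (Bang d) -> sim_base ([[([], fl (Bang d))]; [([], p)]], [], p)
| sim_ctr d p : InS (Bang d) ->
    sim_base ([[([], fl (Bang d))]; [([fl (Bang d); fl (Bang d)], p)]], [], p).

Section Rules.

Variable C : base.
Hypothesis C_sim : extends sim_base C.

Ltac apply_sim_rule rule Cs :=
  eapply (deriv_app_boxes _ _ _ Cs); [exact (C_sim _ rule) | now split_boxes].

Lemma deriv_limpI a b M :
  InS (Limp a b) -> deriv C (M ++ [fl a]) (fl b) -> deriv C M (fl (Limp a b)).
Proof.
  intros Hin H. rewrite <- (app_nil_r M). apply_sim_rule (sim_limpI a b Hin) [M].
Qed.

Lemma deriv_limpE a b M K :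
  InS (Limp a b) -> deriv C M (fl (Limp a b)) -> deriv C K (fl a) ->
  deriv C (M ++ K) (fl b).
Proof.
  intros Hin H1 H2. rewrite <- (app_nil_r K). apply_sim_rule (sim_limpE a b Hin) [M; K].
Qed.

Lemma deriv_tensorI a b M K :
  InS (Tensor a b) -> deriv C M (fl a) -> deriv C K (fl b) ->
  deriv C (M ++ K) (fl (Tensor a b)).
Proof.
  intros Hin H1 H2. rewrite <- (app_nil_r K). apply_sim_rule (sim_tensorI a b Hin) [M; K].
Qed.

Lemma deriv_tensorE a b M K p :
  InS (Tensor a b) -> deriv C M (fl (Tensor a b)) -> deriv C (K ++ [fl a; fl b]) p ->
  deriv C (M ++ K) p.
Proof.
  intros Hin H1 H2. rewrite <- (app_nil_r K). apply_sim_rule (sim_tensorE a b p Hin) [M; K].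
Qed.

Lemma deriv_oneI : InS One -> deriv C [] (fl One).
Proof.
  intros Hin. exact (deriv_app_boxes C [] _ [] (C_sim _ (sim_oneI Hin)) (Forall2_nil _)).
Qed.

Lemma deriv_oneE M K p :
  InS One -> deriv C M (fl One) -> deriv C K p -> deriv C (M ++ K) p.
Proof.
  intros Hin H1 H2. rewrite <- (app_nil_r K). apply_sim_rule (sim_oneE p Hin) [M; K].
Qed.

Lemma deriv_withI a b M :
  InS (With a b) -> deriv C M (fl a) -> deriv C M (fl b) -> deriv C M (fl (With a b)).
Proof.
  intros Hin H1 H2. rewrite <- (app_nil_r M). apply_sim_rule (sim_withI a b Hin) [M].
Qed.

Lemma deriv_withE1 a b M :
  InS (With a b) -> deriv C M (fl (With a b)) -> deriv C M (fl a).
Proof.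
  intros Hin H. rewrite <- (app_nil_r M). apply_sim_rule (sim_withE1 a b Hin) [M].
Qed.

Lemma deriv_withE2 a b M :
  InS (With a b) -> deriv C M (fl (With a b)) -> deriv C M (fl b).
Proof.
  intros Hin H. rewrite <- (app_nil_r M). apply_sim_rule (sim_withE2 a b Hin) [M].
Qed.

Lemma deriv_plusI1 a b M :
  InS (Plus a b) -> deriv C M (fl a) -> deriv C M (fl (Plus a b)).
Proof.
  intros Hin H. rewrite <- (app_nil_r M). apply_sim_rule (sim_plusI1 a b Hin) [M].
Qed.

Lemma deriv_plusI2 a b M :
  InS (Plus a b) -> deriv C M (fl b) -> deriv C M (fl (Plus a b)).
Proof.
  intros Hin H. rewrite <- (app_nil_r M). apply_sim_rule (sim_plusI2 a b Hin) [M].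
Qed.

Lemma deriv_plusE a b M K p :
  InS (Plus a b) -> deriv C M (fl (Plus a b)) ->
  deriv C (K ++ [fl a]) p -> deriv C (K ++ [fl b]) p -> deriv C (M ++ K) p.
Proof.
  intros Hin H1 H2 H3. rewrite <- (app_nil_r K).
  apply_sim_rule (sim_plusE a b p Hin) [M; K].
Qed.

Lemma deriv_zeroE M K p : InS Zero -> deriv C M (fl Zero) -> deriv C (M ++ K) p.
Proof.
  intros Hin H. rewrite <- (app_nil_r K). apply_sim_rule (sim_zeroE p Hin) [M; K].
Qed.

Lemma deriv_topI M : InS Top -> deriv C M (fl Top).
Proof. intros Hin. rewrite <- (app_nil_r M). apply_sim_rule (sim_topI Hin) [M]. Qed.

Lemma deriv_bangI d : InS (Bang d) -> deriv C [] (fl d) -> deriv C [] (fl (Bang d)).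
Proof.
  intros Hin H.
  change (deriv C (concat [] ++ concat (map fst (@nil (list atom * atom)))) (fl (Bang d))).
  apply d_app with (A := []) (S := [([], fl d)]).
  - exact (C_sim _ (sim_bangI d Hin)).
  - reflexivity.
  - intros ? ? [].
  - intros ? ? [].
  - intros ? ? [].
  - intros Q q [[= <- <-]|[]]. exact H.
Qed.

Lemma deriv_wk d M K p :
  InS (Bang d) -> deriv C M (fl (Bang d)) -> deriv C K p -> deriv C (M ++ K) p.
Proof.
  intros Hin H1 H2. rewrite <- (app_nil_r K). apply_sim_rule (sim_wk d p Hin) [M; K].
Qed.

Lemma deriv_ctr d M K p :
  InS (Bang d) -> deriv C M (fl (Bang d)) ->
  deriv C (K ++ [fl (Bang d); fl (Bang d)]) p -> deriv C (M ++ K) p.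
Proof.
  intros Hin H1 H2. rewrite <- (app_nil_r K). apply_sim_rule (sim_ctr d p Hin) [M; K].
Qed.

Lemma deriv_weaken_flbang d K q :
  InS (Bang d) -> deriv C K q -> deriv C (fl (Bang d) :: K) q.
Proof. intros Hin H. apply (deriv_wk d [_]); auto using d_ref. Qed.

Lemma deriv_contract_flbang d K q :
  InS (Bang d) -> deriv C (fl (Bang d) :: fl (Bang d) :: K) q ->
  deriv C (fl (Bang d) :: K) q.
Proof.
  intros Hin H. apply (deriv_ctr d [_]); auto using d_ref.
  eapply d_perm; [|exact H]. apply (Permutation_app_comm [_; _]).
Qed.

Lemma deriv_contract_repeat d n K q :
  InS (Bang d) -> deriv C (repeat (fl (Bang d)) (S n) ++ K) q ->
  deriv C (fl (Bang d) :: K) q.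
Proof.
  intros Hin. induction n as [|n IH]; [auto|].
  intros H. apply IH, deriv_contract_flbang; auto.
Qed.

Lemma deriv_cut_flbang d L K q :
  InS (Bang d) -> deriv C L (fl (Bang d)) -> deriv C (fl (Bang d) :: K) q ->
  deriv C (L ++ K) q.
Proof.
  intros Hin HL HK. apply (deriv_ctr d); auto.
  eapply d_perm; [apply (Permutation_app_comm [_; _])|].
  apply deriv_weaken_flbang; auto.
Qed.

Lemma deriv_app_flbang d A S p Cs ext :
  InS (Bang d) -> C (A, S, p) -> length Cs = length A ->
  (forall T Ci, In (T, Ci) (combine A Cs) ->
     forall Q q, In (Q, q) T -> deriv C (fl (Bang d) :: Ci ++ Q) q) ->
  (forall Cj e, In (Cj, e) ext -> persistent C e) ->
  (forall Cj e, In (Cj, e) ext -> deriv C (fl (Bang d) :: Cj) e) ->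
  (forall U v, In (U, v) S -> deriv C (fl (Bang d) :: map snd ext ++ U) v) ->
  deriv C (fl (Bang d) :: concat Cs ++ concat (map fst ext)) p.
Proof.
  intros Hin Hrule Hlen Hboxes Hpers Hext HS.
  set (x := fl (Bang d)) in *.
  (* The extra persistent premise [x ⊢ x] guarantees at least one copy of [x]
     to contract, even for rules without premises. *)
  set (ext' := ([x], x) :: map (fun e => (x :: fst e, snd e)) ext).
  assert (Hext' : forall Cj e, In (Cj, e) ext' ->
                    (Cj = [x] /\ e = x) \/ exists C0, Cj = x :: C0 /\ In (C0, e) ext).
  { intros Cj e [[= <- <-]|Hj]; [now left|right].
    apply in_map_iff in Hj as [[C0 e0] [[= <- <-] Hj]]. eauto. }
  apply (deriv_contract_repeat d (length Cs + length ext)); auto.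
  apply d_perm with (concat (map (cons x) Cs) ++ concat (map fst ext')).
  { unfold ext'. cbn [map fst concat app]. rewrite map_map.
    replace (map _ ext) with (map (cons x) (map fst ext)) by now rewrite map_map.
    rewrite !concat_map_cons_perm, length_map, <- Permutation_middle.
    cbn [repeat app]. rewrite repeat_app, <- !app_assoc.
    apply perm_skip, Permutation_app_head, Permutation_app_swap_app. }
  apply d_app with (A := A) (S := S); auto.
  - now rewrite length_map.
  - intros T C' HT. destruct (In_combine_map_cons x A Cs T C' HT) as [C0 [-> H0]].
    exact (Hboxes T C0 H0).
  - intros Cj e [[_ ->]|[C0 [_ Hj]]]%Hext'; eauto.
    exists [([], fl d)]. split; [exact (C_sim _ (sim_bangI d Hin))|discriminate].
  - intros Cj e [[-> ->]|[C0 [-> Hj]]]%Hext'; [apply d_ref|eauto].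
  - intros U v HU. unfold ext'. cbn [map snd]. rewrite map_map. exact (HS U v HU).
Qed.

Lemma deriv_discharge_axiom d M q :
  InS (Bang d) -> deriv (add_axiom C (fl d)) M q -> deriv C (fl (Bang d) :: M) q.
Proof.
  intros Hin H.
  induction H as [M M' q HP _ IH | q
                 | A S q Cs ext Hrule Hlen _ IHboxes Hpers _ IHext _ IHS].
  - eapply d_perm; [apply perm_skip, HP | exact IH].
  - apply deriv_weaken_flbang; auto using d_ref.
  - assert (Hpers' : forall Cj e, In (Cj, e) ext -> persistent C e).
    { intros Cj e Hj. destruct (Hpers Cj e Hj) as [S0 [[HS0|[= -> _]] Hne]]; [|easy].
      now exists S0. }
    destruct Hrule as [Hrule|[= -> -> ->]].
    + apply (deriv_app_flbang d A S); auto.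
    + destruct Cs; [|discriminate].
      apply (deriv_app_flbang d [[([], fl (Bang d))]; [([fl d], fl d)]] [] _ [[]; []]);
        auto.
      * exact (C_sim _ (sim_der d (fl d) Hin)).
      * intros T Ci [[= <- <-]|[[= <- <-]|[]]] Q q' [[= <- <-]|[]]; simpl;
          auto using d_ref, deriv_weaken_flbang.
Qed.

End Rules.

Hypothesis InS_closed : subformula_closed InS.

Section Flattening.

Hypothesis fl_Atom : forall p, fl (Atom p) = p.

Definition flattens (χ : formula) : Prop :=
  forall D, extends sim_base D -> forall L, supp D L χ <-> deriv D L (fl χ).

Lemma deriv_of_ant_supp a F K :
  flattens a -> extends sim_base F -> ant_supp F K a -> deriv F K (fl a).
Proof. intros Ha HF H. apply Ha; auto. now apply supp_of_ant_supp. Qed.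

Lemma deriv_flatten_ant a E M p :
  flattens a -> extends sim_base E ->
  (forall F, extends E F -> forall Ka, ant_supp F Ka a -> deriv F (M ++ Ka) p) ->
  deriv E (M ++ [fl a]) p.
Proof.
  intros Ha HE H. destruct (bang_or_plain a) as [[d ->]|[_ Hsupp]].
  - assert (Hd : supp E [fl (Bang d)] (Bang d)) by (apply Ha; auto using d_ref).
    apply d_perm with ([fl (Bang d)] ++ M); [apply Permutation_app_comm|].
    apply Hd; [apply extends_refl|]. intros F HF HdF.
    rewrite <- (app_nil_r M). apply H; [exact HF | now split].
  - apply H; [apply extends_refl|]. rewrite Hsupp. apply Ha; auto using d_ref.
Qed.

Lemma deriv_flatten_ctx G E M p :
  (forall a, In a G -> flattens a) -> extends sim_base E ->
  (forall F, extends E F -> forall K, ctx_supp F K G -> deriv F (M ++ K) p) ->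
  deriv E (M ++ map fl G) p.
Proof.
  revert E M. induction G as [|a G IH]; intros E M HG HE H; simpl.
  - apply H; [apply extends_refl | constructor].
  - apply d_perm with ((M ++ map fl G) ++ [fl a]).
    { rewrite <- app_assoc. apply Permutation_app_head, Permutation_sym,
        Permutation_cons_append. }
    apply deriv_flatten_ant; [apply HG; now left | exact HE |]. intros F HF Ka Ha.
    apply d_perm with ((M ++ Ka) ++ map fl G).
    { rewrite <- !app_assoc. apply Permutation_app_head, Permutation_app_comm. }
    apply IH; [intros; apply HG; now right | eauto using extends_trans |].
    intros F' HF' K HK. rewrite <- app_assoc. apply H; [eauto using extends_trans|].
    constructor; eauto using ant_supp_extends.
Qed.

Lemma flattens_Atom p : flattens (Atom p).
Proof. intros D HD L. simpl. now rewrite fl_Atom. Qed.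

Lemma flattens_Top : InS Top -> flattens Top.
Proof. intros Hin D HD L. simpl. split; [intros _; now apply deriv_topI | auto]. Qed.

Lemma flattens_Zero : InS Zero -> flattens Zero.
Proof.
  intros Hin D HD L. simpl. split.
  - intros H. specialize (H (fl Zero) []). now rewrite app_nil_r in H.
  - intros H p K. now apply deriv_zeroE.
Qed.

Lemma flattens_One : InS One -> flattens One.
Proof.
  intros Hin D HD L. simpl. split.
  - intros H. rewrite <- (app_nil_r L). apply H; auto using extends_refl.
    now apply deriv_oneI.
  - intros H C HC K p Hp.
    apply deriv_oneE; eauto using extends_trans, deriv_extends.
Qed.

Lemma flattens_Limp a b :
  InS (Limp a b) -> flattens a -> flattens b -> flattens (Limp a b).
Proof.
  intros Hin Ha Hb D HD L. rewrite supp_limp. split.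
  - intros H. apply deriv_limpI; auto.
    apply deriv_flatten_ant; auto. intros F HF Ka HKa.
    apply (Hb F); eauto using extends_trans.
  - intros H C HC K HK.
    assert (HC' : extends sim_base C) by eauto using extends_trans.
    apply (Hb C HC').
    apply (deriv_limpE C HC' a); eauto using deriv_extends, deriv_of_ant_supp.
Qed.

Lemma flattens_Tensor a b :
  InS (Tensor a b) -> flattens a -> flattens b -> flattens (Tensor a b).
Proof.
  intros Hin Ha Hb D HD L. rewrite supp_tensor. split.
  - intros H. rewrite <- (app_nil_r L). apply H; [apply extends_refl|].
    intros F HF Ka Kb HKa HKb. simpl.
    assert (HF' : extends sim_base F) by eauto using extends_trans.
    apply deriv_tensorI; eauto using deriv_of_ant_supp.
  - intros H C HC K p Hp.
    assert (HC' : extends sim_base C) by eauto using extends_trans.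
    apply (deriv_tensorE C HC' a b); eauto using deriv_extends.
    change (K ++ [fl a; fl b]) with (K ++ [fl a] ++ [fl b]). rewrite app_assoc.
    apply deriv_flatten_ant; auto. intros F HF Kb HKb.
    apply d_perm with ((K ++ Kb) ++ [fl a]).
    { rewrite <- !app_assoc. apply Permutation_app_head, Permutation_app_comm. }
    apply deriv_flatten_ant; eauto using extends_trans. intros G HG Ka HKa.
    apply d_perm with (K ++ Ka ++ Kb).
    { rewrite <- !app_assoc. apply Permutation_app_head, Permutation_app_comm. }
    apply Hp; eauto using extends_trans, ant_supp_extends.
Qed.

Lemma flattens_With a b :
  InS (With a b) -> flattens a -> flattens b -> flattens (With a b).
Proof.
  intros Hin Ha Hb D HD L. simpl. rewrite (Ha D HD), (Hb D HD). split.
  - intros [H1 H2]. now apply deriv_withI.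
  - intros H. split; [eapply deriv_withE1 | eapply deriv_withE2]; eauto.
Qed.

Lemma flattens_Plus a b :
  InS (Plus a b) -> flattens a -> flattens b -> flattens (Plus a b).
Proof.
  intros Hin Ha Hb D HD L. rewrite supp_plus. split.
  - intros H. rewrite <- (app_nil_r L). apply H; [apply extends_refl| |];
      intros F HF K HK; assert (HF' : extends sim_base F) by eauto using extends_trans.
    + apply deriv_plusI1; eauto using deriv_of_ant_supp.
    + apply deriv_plusI2; eauto using deriv_of_ant_supp.
  - intros H C HC K p H1 H2.
    assert (HC' : extends sim_base C) by eauto using extends_trans.
    apply (deriv_plusE C HC' a b); eauto using deriv_extends, deriv_flatten_ant.
Qed.

Lemma flattens_Bang d : InS (Bang d) -> flattens d -> flattens (Bang d).
Proof.
  intros Hin Hd D HD L. simpl supp. split.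
  - intros H. rewrite <- (app_nil_r L). apply H; [apply extends_refl|].
    intros F HF HdF. assert (HF' : extends sim_base F) by eauto using extends_trans.
    apply deriv_bangI; auto. now apply Hd.
  - intros H C HC K p Hp.
    assert (HC' : extends sim_base C) by eauto using extends_trans.
    set (E := add_axiom C (fl d)).
    assert (HCE : extends C E) by (intros r Hr; now left).
    assert (HdE : supp E [] d).
    { apply Hd; [eauto using extends_trans|].
      apply (deriv_app_boxes _ [] _ []); [now right | constructor]. }
    apply (deriv_cut_flbang C HC' d); eauto using deriv_extends.
    apply (deriv_discharge_axiom C HC' d); auto.
Qed.

Lemma flattens_all χ : InS χ -> flattens χ.
Proof.
  induction χ; intros Hin; pose proof (InS_closed _ Hin) as Hsub; simpl in Hsub.
  - apply flattens_Atom.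
  - now apply flattens_Top.
  - now apply flattens_Zero.
  - now apply flattens_One.
  - apply flattens_Limp; tauto.
  - apply flattens_Tensor; tauto.
  - apply flattens_With; tauto.
  - apply flattens_Plus; tauto.
  - apply flattens_Bang; tauto.
Qed.

End Flattening.

Section Sharpening.

Variable unfl : atom -> formula.
Hypothesis unfl_fl : forall χ, InS χ -> unfl (fl χ) = χ.

Lemma sim_base_persistent e :
  persistent sim_base e -> exists δ, InS (Bang δ) /\ e = fl (Bang δ).
Proof. intros [S [HS Hne]]. inversion HS; subst; eauto; congruence. Qed.

Lemma nd_sim_rule A p Cs :
  sim_base (A, [], p) ->
  Forall2 (box_holds (fun M q => nd (map unfl M) (unfl q))) Cs A ->
  nd (map unfl (concat Cs)) (unfl p).
Proof.
  intros Hrule Hboxes.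
  inversion Hrule; subst;
    match goal with Hin : InS _ |- _ => pose proof (InS_closed _ Hin); simpl in * end;
    repeat match goal with
    | H : Forall2 _ _ (_ :: _) |- _ => inversion H; subst; clear H
    | H : Forall2 _ _ [] |- _ => inversion H; subst; clear H
    | H : box_holds _ _ (_ :: _) |- _ => inversion H; subst; clear H
    | H : Forall _ (_ :: _) |- _ => inversion H; subst; clear H
    | H : box_holds _ _ [] |- _ => clear H
    end;
    cbn [concat fst snd] in *; rewrite ?app_nil_r, ?map_app in *; cbn [map] in *;
    repeat (rewrite unfl_fl in * by tauto).
  all: first
    [ now apply nd_limpI | now apply nd_limpE with a | now apply nd_tensorI
    | now apply nd_tensorE with a b | now apply nd_oneI | now apply nd_oneE
    | now apply nd_withI | now apply nd_withE1 with b | now apply nd_withE2 with a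
    | now apply nd_plusI1 | now apply nd_plusI2 | now apply nd_plusE with a b
    | now apply nd_zero | now apply nd_top
    | now apply nd_der with d | now apply nd_wk with d | now apply nd_ctr with d ].
Qed.

Lemma nd_of_deriv L p : deriv sim_base L p -> nd (map unfl L) (unfl p).
Proof.
  induction 1 as [L L' p HP _ IH | p
                 | A S p Cs ext Hrule Hlen _ IHboxes Hpers _ IHext _ IHS].
  - eapply nd_perm; [apply Permutation_map, HP | exact IH].
  - apply nd_ax.
  - set (prems := map (fun e => (map unfl (fst e), unfl (snd e))) ext).
    assert (Hprems : forall G χ, In (G, χ) prems -> nd G χ /\ exists δ, χ = Bang δ).
    { intros G χ Hin. apply in_map_iff in Hin as [[Cj e] [[= <- <-] Hj]].
      destruct (sim_base_persistent e (Hpers Cj e Hj)) as [δ [Hδ ->]].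
      pose proof (IHext Cj _ Hj) as HCj.
      rewrite unfl_fl in HCj |- * by exact Hδ. eauto. }
    assert (Hconcat : map unfl (concat (map fst ext)) = concat (map fst prems)).
    { unfold prems. now rewrite concat_map, !map_map. }
    rewrite map_app, Hconcat. destruct S as [|s S].
    + apply nd_weaken_bangs; auto. apply (nd_sim_rule A); auto.
      apply Forall2_of_combine; auto. intros Ci T HT.
      apply Forall_forall. intros [Q q] HQ. exact (IHboxes T Ci HT Q q HQ).
    + (* Only [sim_bangI] has a nonempty box [S]; it is read back as promotion. *)
      inversion Hrule as [| | | | | | | | | | | | | | d Hin | | |]; subst.
      destruct Cs; [|discriminate]. simpl. rewrite unfl_fl by exact Hin.
      apply nd_prom_bangs; auto.
      specialize (IHS [] (fl d) (or_introl eq_refl)).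
      rewrite app_nil_r, map_map, unfl_fl in IHS by now apply InS_closed in Hin.
      unfold prems. now rewrite map_map.
Qed.

End Sharpening.

End Simulation.

Fixpoint subformulas (χ : formula) : list formula :=
  χ :: match χ with
       | Limp a b | Tensor a b | With a b | Plus a b => subformulas a ++ subformulas b
       | Bang a => subformulas a
       | _ => []
       end.

Lemma subformulas_refl χ : In χ (subformulas χ).
Proof. destruct χ; now left. Qed.

Lemma subformulas_trans ψ χ :
  In χ (subformulas ψ) -> incl (subformulas χ) (subformulas ψ).
Proof.
  revert χ. induction ψ; simpl; intros χ [<-|H]; try apply incl_refl; try contradiction.
  all: try (apply in_app_or in H as [H|H];
            [apply incl_tl, incl_appl | apply incl_tl, incl_appr]; auto).
  all: apply incl_tl; auto.
Qed.

Lemma In_subformulas_concat l χ : In χ l -> In χ (concat (map subformulas l)).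
Proof.
  intros H. apply in_concat. exists (subformulas χ).
  split; [now apply in_map | apply subformulas_refl].
Qed.

Lemma subformulas_concat_closed l :
  subformula_closed (fun χ => In χ (concat (map subformulas l))).
Proof.
  assert (Hsub : forall χ a, In χ (concat (map subformulas l)) ->
                   In a (subformulas χ) -> In a (concat (map subformulas l))).
  { intros χ a Hχ Ha. apply in_concat in Hχ as [s [Hs Hχ]].
    apply in_map_iff in Hs as [ψ [<- Hψ]].
    apply in_concat. exists (subformulas ψ). split; [now apply in_map|].
    exact (subformulas_trans ψ χ Hχ a Ha). }
  intros χ Hχ. destruct χ; auto; simpl.
  all: try split; apply (Hsub _ _ Hχ); simpl; right; try apply in_or_app;
    auto using subformulas_refl.
Qed.

Definition formula_eq_dec (x y : formula) : {x = y} + {x <> y}.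
Proof. decide equality; apply Nat.eq_dec. Defined.

Fixpoint position (x : formula) (l : list formula) : nat :=
  match l with
  | [] => 0
  | y :: l' => if formula_eq_dec x y then 0 else S (position x l')
  end.

Lemma nth_position x l : In x l -> nth (position x l) l Top = x.
Proof.
  induction l as [|y l IH]; simpl; [tauto|].
  destruct (formula_eq_dec x y); [now subst|].
  intros [->|H]; [congruence|auto].
Qed.

Definition atom_of (χ : formula) : nat := match χ with Atom p => p | _ => 0 end.

Definition atom_bound (l : list formula) : nat := S (list_max (map atom_of l)).

Lemma atom_lt_bound l p : In (Atom p) l -> p < atom_bound l.
Proof.
  intros H. unfold atom_bound. apply Nat.lt_succ_r.
  pose proof (proj1 (list_max_le (map atom_of l) _) (le_n _)) as Hmax.
  rewrite Forall_forall in Hmax. exact (Hmax p (in_map atom_of _ _ H)).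
Qed.

(* Atoms must code themselves (⊩ p is ⊢ p); the other formulae of [l] are
   numbered above all atoms of [l], so [code l] is injective on [l]. *)
Definition code (l : list formula) (χ : formula) : atom :=
  match χ with Atom p => p | _ => atom_bound l + position χ l end.

Definition decode (l : list formula) (n : atom) : formula :=
  if n <? atom_bound l then Atom n else nth (n - atom_bound l) l Top.

Lemma decode_code l χ : In χ l -> decode l (code l χ) = χ.
Proof.
  intros H. unfold decode, code. destruct χ.
  1: now rewrite (proj2 (Nat.ltb_lt _ _) (atom_lt_bound l a H)).
  all: rewrite (proj2 (Nat.ltb_ge _ _)), Nat.add_sub_swap, Nat.sub_diag by lia;
    now apply nth_position.
Qed.

Theorem theorem7 (Γ : list formula) (φ : formula) :
  valid Γ φ -> nd Γ φ.
Proof.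
  intros Hvalid.
  set (l := concat (map subformulas (φ :: Γ))).
  set (InS := fun χ => In χ l).
  assert (Hl : forall χ, In χ (φ :: Γ) -> InS χ) by apply In_subformulas_concat.
  assert (Hdecode : forall χ, InS χ -> decode l (code l χ) = χ) by apply decode_code.
  assert (Hflat : forall χ, InS χ -> flattens (code l) InS χ)
    by (apply (flattens_all (code l) InS); [apply subformulas_concat_closed | reflexivity]).
  assert (Hderiv : deriv (sim_base (code l) InS) ([] ++ map (code l) Γ) (code l φ)).
  { apply (deriv_flatten_ctx (code l) InS);
      [intros; apply Hflat, Hl; now right | apply extends_refl |].
    intros F HF K HK. apply (Hflat φ); [apply Hl; now left | exact HF |].
    exact (valid_supp Γ φ Hvalid F K HK). }
  apply (nd_of_deriv (code l) InS (subformulas_concat_closed _) (decode l) Hdecode) in Hderiv.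
  cbn [app] in Hderiv.
  rewrite map_map, (map_ext_in _ id), map_id, Hdecode in Hderiv; auto using in_eq, in_cons.
Qed.
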